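(* Let $(X,\mathcal A,\mathfrak m)$ be a probability space. Then $\|\cdot\|_{0^+}$ and $\|\cdot\|_{0^-}$ are hyperbolic norms on ${\sf L}(X)$, and $$\int fg\,d\mathfrak m\ge\|f\|_{0^+}\|g\|_{0^-}\qquad\forall f,g\in{\sf L}(X),$$ $$\|f\|_{0^\pm}=\inf\Big\{\int fg\,d\mathfrak m:\ g\in{\sf L}(X),\ \|g\|_{0^\mp}\ge1\Big\}\qquad\forall f\in{\sf L}(X),$$ $$\|f\|_{0^\pm}=\frac{1}{\|1/f\|_{0^\mp}}\qquad\forall f\in{\sf L}(X).$$
   Context: ${\sf L}(X)$ is the set of $\mathcal A$-measurable functions $X\to[0,+\infty]$ modulo $\mathfrak m$-a.e. equality, with pointwise sum and multiplication by nonnegative scalars (a prewedge). Conventions: $0\cdot(+\infty)=0$, $\log 0=-\infty$, $\log(+\infty)=+\infty$, $\exp(-\infty)=0$, $\exp(+\infty)=+\infty$, $1/0=+\infty$, $1/(+\infty)=0$. For measurable $\varphi:X\to[-\infty,+\infty]$, $\int\varphi\,d\mathfrak m$ is well defined when at most one of $\int\varphi^+d\mathfrak m$, $\int\varphi^-d\mathfrak m$ is $+\infty$; $\int_+\varphi\,d\mathfrak m$ equals $\int\varphi\,d\mathfrak m$ if well defined and $+\infty$ otherwise, $\int_-\varphi\,d\mathfrak m$ equals $\int\varphi\,d\mathfrak m$ if well defined and $-\infty$ otherwise. Define $\|f\|_{0^+}:=\exp(\int_+\log f\,d\mathfrak m)$ and $\|f\|_{0^-}:=\exp(\int_-\log f\,d\mathfrak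 m)$. A hyperbolic norm on a prewedge $W$ is a map ${\sf hn}:W\to[0,\infty]$ with ${\sf hn}(0)=0$ and ${\sf hn}(\lambda_1v_1+\lambda_2v_2)\ge\lambda_1{\sf hn}(v_1)+\lambda_2{\sf hn}(v_2)$ for all $\lambda_i\in[0,\infty)$. *)

From HB Require Import structures.
From mathcomp Require Import all_boot all_order all_algebra.
From mathcomp Require Import all_classical all_reals all_analysis.
From mathcomp Require Import measurable_realfun.
Set Implicit Arguments. Unset Strict Implicit. Unset Printing Implicit Defensive.
Import Order.TTheory GRing.Theory Num.Theory.
Local Open Scope classical_set_scope.
Local Open Scope ring_scope.
Local Open Scope ereal_scope.

Section Defs.
Context {d : measure_display} {T : measurableType d} {R : realType}.
Variable mu : {measure set T -> \bar R}.

(* representatives of elements of L(X): measurable functions X -> [0,+oo] *)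
Definition Lset : set (T -> \bar R) :=
  [set f : T -> \bar R | measurable_fun setT f /\ forall x, 0 <= f x].

Definition ae_eq (f g : T -> \bar R) : Prop := {ae mu, forall x, f x = g x}.

(* prewedge operations: pointwise sum and nonnegative scalar multiple
   (with 0 * (+oo) = 0, which is MathComp's convention) *)
Definition Ladd (f g : T -> \bar R) : T -> \bar R := fun x => f x + g x.
Definition Lscale (l : R) (f : T -> \bar R) : T -> \bar R := fun x => l%:E * f x.
Definition Lzero : T -> \bar R := fun _ => 0.

Definition is_hyperbolic_norm (hn : (T -> \bar R) -> \bar R) : Prop :=
  [/\ (forall f g, Lset f -> Lset g -> ae_eq f g -> hn f = hn g),
      (forall f, Lset f -> 0 <= hn f),
      hn Lzero = 0 &
      (forall (l1 l2 : R) f1 f2, (0 <= l1)%R -> (0 <= l2)%R -> Lset f1 -> Lset f2 ->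
         hn (Ladd (Lscale l1 f1) (Lscale l2 f2)) >= l1%:E * hn f1 + l2%:E * hn f2)].

Definition int_plus (phi : T -> \bar R) : \bar R :=
  if (\int[mu]_x (phi^\+ x) == +oo) && (\int[mu]_x (phi^\- x) == +oo)
  then +oo else \int[mu]_x phi x.
Definition int_minus (phi : T -> \bar R) : \bar R :=
  if (\int[mu]_x (phi^\+ x) == +oo) && (\int[mu]_x (phi^\- x) == +oo)
  then -oo else \int[mu]_x phi x.

(* log 0 = -oo, log +oo = +oo (lne); exp -oo = 0, exp +oo = +oo (expeR) *)
Definition norm0p (f : T -> \bar R) : \bar R := expeR (int_plus (fun x => lne (f x))).
Definition norm0m (f : T -> \bar R) : \bar R := expeR (int_minus (fun x => lne (f x))).

End Defs.

Definition einv {R : realType} (x : \bar R) : \bar R :=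
  match x with
  | r%:E => if r == 0%R then +oo else (r^-1)%:E
  | +oo => 0
  | -oo => 0
  end.

From HB Require Import structures.
From mathcomp Require Import all_boot all_order all_algebra.
From mathcomp Require Import all_classical all_reals all_analysis.
From mathcomp Require Import measurable_realfun.
From mathcomp Require Import lra.
Import Order.TTheory GRing.Theory Num.Theory.
Local Open Scope classical_set_scope.
Local Open Scope ereal_scope.

(** The geometric means are exponentials of integrals of [ln f], taken with
    opposite conventions for [+oo - +oo]; inverting [f] negates [ln f] and
    swaps the two conventions, which gives the reciprocal formulas.  Jensen's
    inequality for [ln] on a probability space gives
    [||f||_0+ * ||g||_0- <= exp (int ln (f g)) <= int f g], and [g := c / f]
    with [c] slightly above the norm of [f] shows that this bound is attained
    in the infimum.  Being infima of the linear functionals [f |-> int f g],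
    both norms are superlinear. *)

Section ereal_log.
Context {R : realType}.
Implicit Types (x y a b : \bar R).

Lemma einv_ge0 x : 0 <= x -> 0 <= einv x.
Proof.
case: x => [r||] //=; rewrite lee_fin => r0; case: ifPn => // _.
by rewrite lee_fin invr_ge0.
Qed.

Lemma einvK x : 0 <= x -> einv (einv x) = x.
Proof.
case: x => [r||] //=; last by rewrite eqxx.
rewrite lee_fin => r0; have [->|rn0] := eqVneq r 0%R; first by [].
by rewrite /= invr_eq0 (negbTE rn0) invrK.
Qed.

Lemma lne_einv x : 0 <= x -> lne (einv x) = - lne x.
Proof.
case: x => [r||] //=; last by rewrite lexx.
rewrite lee_fin => r0; have [->|rn0] := eqVneq r 0%R; first by rewrite lexx.
have r0' : (0 < r)%R by rewrite lt_neqAle eq_sym rn0.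
by rewrite /= !leNgt invr_gt0 r0' /= lnV ?posrE.
Qed.

Lemma expeRN y : expeR (- y) = einv (expeR y).
Proof. by case: y => [r||] //=; rewrite ?eqxx // gt_eqF ?expR_gt0 // expRN. Qed.

Lemma einv_expeR x : 0 <= x -> einv x = expeR (- lne x).
Proof.
by move=> x0; rewrite -lne_einv // lneK // in_itv /= leey andbT einv_ge0.
Qed.

Lemma ge0_lneM x y : 0 <= x -> 0 <= y -> lne (x * y) = lne x + lne y.
Proof.
rewrite le_eqVlt => /predU1P[<-|x0]; first by rewrite mul0e le0_lneNy.
rewrite le_eqVlt => /predU1P[<-|y0]; first by rewrite mule0 le0_lneNy // addeNy.
by rewrite lneM // in_itv /= leey andbT.
Qed.

Lemma maxe0_lne_le x : 0 <= x -> maxe (lne x) 0 <= x.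
Proof.
move=> x0; rewrite ge_max x0 andbT.
case: x x0 => [r||] //=; rewrite ?lee_fin => r0.
case: ifPn => [_|]; first by rewrite leNye.
by rewrite -ltNge lee_fin => /ln_sublinear/ltW.
Qed.

Lemma lne_le_tangent (c : R) x : (0 < c)%R -> 0 <= x ->
  lne x <= x * (c^-1)%:E + (ln c - 1)%:E.
Proof.
move=> c0; case: x => [r||] //=; rewrite ?lee_fin => r0; last first.
  by rewrite gt0_mulye ?lte_fin ?invr_gt0 // addye.
case: ifPn => [_|]; first by rewrite leNye.
rewrite -ltNge => {}r0; rewrite -EFinM -EFinD lee_fin.
have : (ln (r / c) <= r / c - 1)%R.
  rewrite -[X in ln X](addrNK 1%R) addrC; apply: le_ln1Dx.
  have : (0 < r / c)%R by rewrite divr_gt0.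
  lra.
by rewrite ln_div ?posrE //; lra.
Qed.

Lemma mul_einv_le (c : R) x : (0 < c)%R -> 0 <= x -> x * (c%:E * einv x) <= c%:E.
Proof.
move=> c0; case: x => [r||] //= => [|_]; last by rewrite !mule0 lee_fin ltW.
rewrite lee_fin => r0; case: ifPn => [/eqP->|rn0]; first by rewrite mul0e lee_fin ltW.
by rewrite -!EFinM lee_fin mulrCA divff // mulr1.
Qed.

Lemma einv_ge1 (c : R) x : 0 <= x -> x < c%:E -> 1 <= c%:E * einv x.
Proof.
case: x => [r||] //=; rewrite lee_fin lte_fin => r0 rc.
case: ifPn => [_|rn0]; first by rewrite gt0_muley ?lte_fin ?leey //; lra.
have rp : (0 < r)%R by rewrite lt_neqAle eq_sym rn0.
by rewrite -EFinM lee_fin ler_pdivlMr // mul1r ltW.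
Qed.

Let maxe_fin (r : R) : maxe r%:E 0 = (Num.max r 0)%:E.
Proof. by rewrite EFin_max. Qed.

Ltac ereal_cases a b := case: a => [?||]; case: b => [?||] //=;
  rewrite ?(addNye, addeNy, addye, addey) //;
  rewrite -?EFinD -?EFinN ?maxNye ?maxye ?maxe_fin /= ?leey ?leNye ?lee_fin
    -?EFinD ?lee_fin //;
  rewrite ?maxEle; repeat case: ifPn; rewrite -?ltNge; lra.

Lemma maxe0D_le a b : maxe (a + b) 0 <= maxe a 0 + maxe b 0.
Proof. ereal_cases a b. Qed.

Lemma maxe0ND_le a b : maxe (- (a + b)) 0 <= maxe (- a) 0 + maxe (- b) 0.
Proof. ereal_cases a b. Qed.

Lemma maxe0_le_addN a b : maxe a 0 <= maxe (a + b) 0 + maxe (- b) 0.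
Proof. ereal_cases a b. Qed.

Lemma maxe0D a b :
  maxe (a + b) 0 + maxe (- a) 0 + maxe (- b) 0 =
  maxe (- (a + b)) 0 + maxe a 0 + maxe b 0.
Proof.
case: a => [r||]; case: b => [s||] //=; rewrite ?(addNye, addeNy, addye, addey) //.
all: rewrite -?EFinD ?maxNye ?maxye ?maxe_fin //= -!EFinD; congr EFin.
by rewrite !maxEle; repeat case: ifPn; rewrite -?ltNge; lra.
Qed.

Lemma ge0_fin_num_le x y : 0 <= x -> x <= y -> y \is a fin_num -> x \is a fin_num.
Proof. by case: x => [r||] //; case: y. Qed.

Lemma parts_sumE (a b p1 n1 p2 n2 : \bar R) :
  0 <= a -> 0 <= p1 -> 0 <= p2 ->
  n1 \is a fin_num -> n2 \is a fin_num -> b \is a fin_num ->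
  a + n1 + n2 = b + p1 + p2 -> a - b = (p1 - n1) + (p2 - n2).
Proof.
move: n1 n2 b => [n1||] [n2||] [b||] // + + + _ _ _.
case: a => [a||] // _; case: p1 => [p1||] // _; case: p2 => [p2||] // _ E;
  rewrite -?EFinD ?(addye, addey, addNye, addeNy) // in E *.
by case: E => E; congr EFin; lra.
Qed.

End ereal_log.

Section measurable_ereal_log.
Context {R : realType}.

Lemma measurable_lne : measurable_fun setT (@lne R).
Proof.
rewrite (_ : @lne R = fun x => if x <= 0 then -oo else er_map (@ln R) x); last first.
  by apply: funext => -[r||] //=; case: ifP.
apply: measurable_fun_ifT.
- apply: (measurable_fun_bool true).
  exact: (@emeasurable_fun_infty_c _ _ R setT id measurableT (@measurable_id _ _ setT) 0).
- exact: measurable_cst.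
- exact: (@measurable_er_map _ (measurableTypeR R) R _ (@measurable_ln R)).
Qed.

Lemma measurable_expeR : measurable_fun setT (@expeR R).
Proof.
rewrite (_ : @expeR R = fun x => if x == -oo then 0 else er_map (@expR R) x); last first.
  by apply: funext => -[r||].
apply: measurable_fun_ifT.
- apply: (measurable_fun_bool true).
  rewrite (_ : _ `&` _ = [set -oo]); first exact: emeasurable_set1.
  by apply/seteqP; split => x /=; [case => _ /eqP|move=> ->; split].
- exact: measurable_cst.
- exact: (@measurable_er_map _ (measurableTypeR R) R _ (@measurable_expR R)).
Qed.

End measurable_ereal_log.

Section signed_parts.
Context {d : measure_display} {T : measurableType d} {R : realType}.
Variable P : probability T R.
Implicit Types (phi psi : T -> \bar R).

Definition pos_integral phi := \int[P]_x phi^\+ x.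
Definition neg_integral phi := \int[P]_x phi^\- x.

Lemma pos_integral_ge0 phi : 0 <= pos_integral phi.
Proof. by apply: integral_ge0 => x _; exact: funepos_ge0. Qed.

Lemma neg_integral_ge0 phi : 0 <= neg_integral phi.
Proof. by apply: integral_ge0 => x _; exact: funeneg_ge0. Qed.

Lemma integral_parts phi :
  \int[P]_x phi x = pos_integral phi - neg_integral phi.
Proof. exact: integralE. Qed.

Lemma pos_integral_ae_eq phi psi : measurable_fun setT phi -> measurable_fun setT psi ->
  {ae P, forall x, phi x = psi x} -> pos_integral phi = pos_integral psi.
Proof.
move=> mphi mpsi phipsi; apply: ae_eq_integral => //; try exact: measurable_funepos.
by apply: filterS phipsi => x e _; rewrite !funeposE e.
Qed.

Lemma int_plusE phi :
  int_plus P phi = if pos_integral phi \is a fin_num then \int[P]_x phi x else +oo.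
Proof.
rewrite /int_plus [\int[P]_x phi x]integral_parts -/(pos_integral phi) -/(neg_integral phi).
move: (pos_integral_ge0 phi) (neg_integral_ge0 phi).
by case: (pos_integral phi) => [p||]; case: (neg_integral phi) => [n||]; rewrite /= ?addeNy ?addye.
Qed.

(* with the convention [+oo - +oo = -oo], [int_minus] is just the integral *)
Lemma int_minusE phi : int_minus P phi = \int[P]_x phi x.
Proof.
rewrite /int_minus [\int[P]_x phi x]integral_parts -/(pos_integral phi) -/(neg_integral phi).
by case: ifPn => // /andP[/eqP-> /eqP->].
Qed.

Lemma probability_integral_cst (k : \bar R) : \int[P]_x k = k.
Proof.
rewrite (integral_cst P measurableT k); transitivity (k * 1); last exact: mule1.
by congr (_ * _); exact: probability_setT.
Qed.

Ltac integral_side_conditions := try exact: measurableT;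
  try (by move=> x _; rewrite ?adde_ge0 ?funepos_ge0 ?funeneg_ge0);
  try (by repeat apply: emeasurable_funD;
     first [exact: measurable_funepos | exact: measurable_funeneg | idtac];
     first [apply: measurable_funepos | apply: measurable_funeneg]; apply: emeasurable_funD).

Section additivity.
Context {phi psi : T -> \bar R}.
Hypotheses (mphi : measurable_fun setT phi) (mpsi : measurable_fun setT psi).

Lemma pos_integralD_le : pos_integral (phi \+ psi) <= pos_integral phi + pos_integral psi.
Proof.
rewrite /pos_integral -ge0_integralD; integral_side_conditions.
apply: ge0_le_integral; integral_side_conditions.
by move=> x _; rewrite !funeposE maxe0D_le.
Qed.

Lemma neg_integralD_le : neg_integral (phi \+ psi) <= neg_integral phi + neg_integral psi.
Proof.
rewrite /neg_integral -ge0_integralD; integral_side_conditions.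
apply: ge0_le_integral; integral_side_conditions.
by move=> x _; rewrite !funenegE maxe0ND_le.
Qed.

Lemma pos_integral_le_addN :
  pos_integral phi <= pos_integral (phi \+ psi) + neg_integral psi.
Proof.
rewrite /pos_integral /neg_integral -ge0_integralD; integral_side_conditions.
apply: ge0_le_integral; integral_side_conditions.
by move=> x _; rewrite !funeposE funenegE maxe0_le_addN.
Qed.

Let parts_sum :
  pos_integral (phi \+ psi) + neg_integral phi + neg_integral psi =
  neg_integral (phi \+ psi) + pos_integral phi + pos_integral psi.
Proof.
rewrite /pos_integral /neg_integral.
rewrite -!ge0_integralD; integral_side_conditions.
by apply: eq_integral => x _; rewrite !funeposE !funenegE maxe0D.
Qed.

Lemma fin_neg_integralD : neg_integral phi \is a fin_num -> neg_integral psi \is a fin_num ->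
  \int[P]_x (phi x + psi x) = \int[P]_x phi x + \int[P]_x psi x.
Proof.
move=> nphi npsi; have nsum : neg_integral (phi \+ psi) \is a fin_num.
  apply: ge0_fin_num_le (neg_integral_ge0 _) neg_integralD_le _.
  by rewrite fin_numD nphi npsi.
by rewrite !integral_parts; apply: parts_sumE; rewrite ?pos_integral_ge0.
Qed.

End additivity.

Lemma pos_integral_cst (c : \bar R) : pos_integral (cst c) = maxe c 0.
Proof. by rewrite -[RHS]probability_integral_cst; apply: eq_integral => x _; rewrite funeposE. Qed.

Lemma neg_integral_cst (c : \bar R) : neg_integral (cst c) = maxe (- c) 0.
Proof. by rewrite -[RHS]probability_integral_cst; apply: eq_integral => x _; rewrite funenegE. Qed.

Lemma pos_integralN phi : pos_integral (fun x => - phi x) = neg_integral phi.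
Proof. by rewrite /pos_integral /neg_integral -funeposN. Qed.

Lemma neg_integralN phi : neg_integral (fun x => - phi x) = pos_integral phi.
Proof. by rewrite /pos_integral /neg_integral -funenegN. Qed.

Lemma neg_integral_infty phi : neg_integral phi \isn't a fin_num -> \int[P]_x phi x = -oo.
Proof.
rewrite integral_parts; move: (neg_integral_ge0 phi).
by case: (neg_integral phi) => // _ _; rewrite addeNy.
Qed.

Section shift.
Variables (phi : T -> \bar R) (k : R).
Hypothesis mphi : measurable_fun setT phi.

Let mcst (c : \bar R) : measurable_fun setT (@cst T _ c).
Proof. exact: measurable_cst. Qed.

Let fin_pos_cst (c : R) : pos_integral (cst c%:E) \is a fin_num.
Proof. by rewrite pos_integral_cst maxEle; case: ifP. Qed.

Let fin_neg_cst (c : R) : neg_integral (cst c%:E) \is a fin_num.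
Proof. by rewrite neg_integral_cst maxEle; case: ifP. Qed.

Let phiE : phi = (fun x => phi x + k%:E) \+ cst (- k)%:E.
Proof. by apply: funext => x /=; rewrite EFinN addeK. Qed.

Let mshift : measurable_fun setT (fun x => phi x + k%:E).
Proof. exact: emeasurable_funD. Qed.

Lemma fin_neg_integral_shift :
  (neg_integral (fun x => phi x + k%:E) \is a fin_num) = (neg_integral phi \is a fin_num).
Proof.
apply/idP/idP => fin.
- rewrite phiE; apply: ge0_fin_num_le (neg_integral_ge0 _) (neg_integralD_le mshift (mcst _)) _.
  by rewrite fin_numD fin fin_neg_cst.
- apply: ge0_fin_num_le (neg_integral_ge0 _) (neg_integralD_le mphi (mcst _)) _.
  by rewrite fin_numD fin fin_neg_cst.
Qed.

Lemma fin_pos_integral_shift :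
  (pos_integral (fun x => phi x + k%:E) \is a fin_num) = (pos_integral phi \is a fin_num).
Proof.
apply/idP/idP => fin.
- rewrite phiE; apply: ge0_fin_num_le (pos_integral_ge0 _) (pos_integralD_le mshift (mcst _)) _.
  by rewrite fin_numD fin fin_pos_cst.
- apply: ge0_fin_num_le (pos_integral_ge0 _) (pos_integralD_le mphi (mcst _)) _.
  by rewrite fin_numD fin fin_pos_cst.
Qed.

Lemma integral_shift : \int[P]_x (phi x + k%:E) = \int[P]_x phi x + k%:E.
Proof.
have [fin|inf] := boolP (neg_integral phi \is a fin_num).
  by rewrite (fin_neg_integralD mphi (mcst k%:E)) ?probability_integral_cst.
by rewrite !neg_integral_infty // fin_neg_integral_shift.
Qed.

Lemma int_plus_shift : int_plus P (fun x => phi x + k%:E) = int_plus P phi + k%:E.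
Proof.
rewrite !int_plusE fin_pos_integral_shift integral_shift.
by case: ifPn => // _; rewrite addye.
Qed.

End shift.

Lemma int_minusN phi : int_minus P (fun x => - phi x) = - int_plus P phi.
Proof.
rewrite int_minusE int_plusE; case: ifPn => [fin|inf].
  by apply: integralN; rewrite -/(pos_integral phi) fin_num_adde_defr.
by rewrite neg_integral_infty // neg_integralN.
Qed.

Lemma int_plusN phi : int_plus P (fun x => - phi x) = - int_minus P phi.
Proof.
rewrite int_minusE int_plusE pos_integralN; case: ifPn => [fin|inf].
  by apply: integralN; rewrite -/(neg_integral phi) fin_num_adde_defl ?fin_numN.
by rewrite neg_integral_infty.
Qed.

Lemma integral_le phi psi : measurable_fun setT phi -> measurable_fun setT psi ->
  (forall x, phi x <= psi x) -> \int[P]_x phi x <= \int[P]_x psi x.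
Proof.
move=> mphi mpsi le_phi_psi; rewrite !integral_parts; apply: leeB.
- apply: ge0_le_integral; integral_side_conditions.
  by move=> x _; rewrite !funeposE ge_max !le_max le_phi_psi lexx orbT.
- apply: ge0_le_integral; integral_side_conditions.
  by move=> x _; rewrite !funenegE ge_max !le_max leeN2 le_phi_psi lexx orbT.
Qed.

Lemma int_plus_ae_eq phi psi : measurable_fun setT phi -> measurable_fun setT psi ->
  {ae P, forall x, phi x = psi x} -> int_plus P phi = int_plus P psi.
Proof.
move=> mphi mpsi phipsi; rewrite !int_plusE (pos_integral_ae_eq _ _ mphi mpsi phipsi).
by rewrite (ae_eq_integral psi phi measurableT mphi mpsi) //; exact: filterS phipsi.
Qed.

Lemma int_minus_ae_eq phi psi : measurable_fun setT phi -> measurable_fun setT psi ->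
  {ae P, forall x, phi x = psi x} -> int_minus P phi = int_minus P psi.
Proof.
move=> mphi mpsi phipsi; rewrite !int_minusE.
by rewrite (ae_eq_integral psi phi measurableT mphi mpsi) //; exact: filterS phipsi.
Qed.

End signed_parts.

Section norm0.
Context {d : measure_display} {T : measurableType d} {R : realType}.
Variable P : probability T R.
Implicit Types (f g h : T -> \bar R).

Lemma measurable_lne_comp f : measurable_fun setT f -> measurable_fun setT (fun x => lne (f x)).
Proof. exact: measurableT_comp measurable_lne. Qed.

(* Jensen's inequality, obtained by integrating the tangent lines of [ln] *)
Lemma lne_integral_le h : measurable_fun setT h -> (forall x, 0 <= h x) ->
  \int[P]_x lne (h x) <= lne (\int[P]_x h x).
Proof.
move=> mh h0.
have tangent (c : R) : (0 < c)%R ->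
    \int[P]_x lne (h x) <= \int[P]_x h x * (c^-1)%:E + (ln c - 1)%:E.
  move=> c0; have mhc : measurable_fun setT (fun x => h x * (c^-1)%:E).
    by apply: emeasurable_funM => //; exact: measurable_cst.
  rewrite -ge0_integralZr //; last by rewrite lee_fin invr_ge0 ltW.
  rewrite -integral_shift //; apply: integral_le; first exact: measurable_lne_comp.
    by apply: emeasurable_funD => //; exact: measurable_cst.
  by move=> x; exact: lne_le_tangent.
have : 0 <= \int[P]_x h x by apply: integral_ge0.
case: (\int[P]_x h x) tangent => [r tangent|_ _|//]; last by rewrite leey.
rewrite lee_fin le_eqVlt => /predU1P[r0|r0]; last first.
  rewrite lne_EFin //; apply: le_trans (tangent r r0) _.
  by rewrite -EFinM -EFinD lee_fin divff ?gt_eqF // addrCA subrr addr0.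
rewrite -r0 le0_lneNy // leeNy_eq; rewrite -r0 in tangent.
move: tangent; case: (\int[P]_x lne (h x)) => [t||] // tangent.
- have := tangent (expR t) (expR_gt0 t).
  by rewrite mul0e add0e expRK lee_fin; lra.
- by have := tangent 1%R ltr01; rewrite mul0e add0e ln1 leye_eq.
Qed.

Lemma Lset_scale f (c : R) : (0 <= c)%R -> Lset f -> Lset (fun x => c%:E * f x).
Proof.
move=> c0 [mf f0]; split; first exact: measurable_funeM.
by move=> x; apply: mule_ge0 => //; rewrite lee_fin.
Qed.

Lemma Lset_einv f : Lset f -> Lset (fun x => einv (f x)).
Proof.
case=> mf f0; split; last by move=> x; exact: einv_ge0.
rewrite (_ : (fun x => einv (f x)) = (fun x => expeR (- lne (f x)))); last first.
  by apply: funext => x; rewrite einv_expeR.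
apply: (measurableT_comp measurable_expeR).
apply: (measurableT_comp (@oppe_measurable R setT)); exact: measurable_lne_comp.
Qed.

Lemma Lset_lin (l1 l2 : R) f1 f2 : (0 <= l1)%R -> (0 <= l2)%R -> Lset f1 -> Lset f2 ->
  Lset (Ladd (Lscale l1 f1) (Lscale l2 f2)).
Proof.
move=> l10 l20 L1 L2.
have [m1 p1] := Lset_scale _ _ l10 L1; have [m2 p2] := Lset_scale _ _ l20 L2.
split; first exact: emeasurable_funD.
by move=> x; apply: adde_ge0; [exact: p1 | exact: p2].
Qed.

Lemma integralM_lin (l1 l2 : R) f1 f2 g : (0 <= l1)%R -> (0 <= l2)%R ->
  Lset f1 -> Lset f2 -> Lset g ->
  \int[P]_x (Ladd (Lscale l1 f1) (Lscale l2 f2) x * g x) =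
  l1%:E * \int[P]_x (f1 x * g x) + l2%:E * \int[P]_x (f2 x * g x).
Proof.
move=> l10 l20 [mf1 f10] [mf2 f20] [mg g0].
have m1 : measurable_fun setT (fun x => f1 x * g x) by exact: emeasurable_funM.
have m2 : measurable_fun setT (fun x => f2 x * g x) by exact: emeasurable_funM.
transitivity (\int[P]_x (l1%:E * (f1 x * g x) + l2%:E * (f2 x * g x))).
  apply: eq_integral => x _; rewrite /Ladd /Lscale ge0_muleDl ?muleA //.
  - by apply: mule_ge0 => //; rewrite lee_fin.
  - by apply: mule_ge0 => //; rewrite lee_fin.
rewrite ge0_integralD //; try exact: measurable_funeM.
- by rewrite !ge0_integralZl // ?lee_fin // => x _; exact: mule_ge0.
- by move=> x _; apply: mule_ge0; rewrite ?lee_fin // mule_ge0.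
- by move=> x _; apply: mule_ge0; rewrite ?lee_fin // mule_ge0.
Qed.

Lemma pos_integral_lne_le h : measurable_fun setT h -> (forall x, 0 <= h x) ->
  pos_integral P (fun x => lne (h x)) <= \int[P]_x h x.
Proof.
move=> mh h0; apply: ge0_le_integral => //.
- exact/measurable_funepos/measurable_lne_comp.
- by move=> x _; rewrite funeposE maxe0_lne_le.
Qed.

Lemma integralM_pinfty f g : Lset f -> Lset g ->
  pos_integral P (fun x => lne (f x)) \isn't a fin_num ->
  neg_integral P (fun x => lne (g x)) \is a fin_num ->
  \int[P]_x (f x * g x) = +oo.
Proof.
move=> [mf f0] [mg g0] Finf Gfin; have fg_ge0 x : 0 <= f x * g x by exact: mule_ge0.
apply/eqP; rewrite -leye_eq leNgt -ge0_fin_numE ?integral_ge0 //.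
apply: contra Finf => fgfin.
apply: ge0_fin_num_le (pos_integral_ge0 _ _) (pos_integral_le_addN _ _ _) _.
- exact: measurable_lne_comp mf.
- exact: measurable_lne_comp mg.
rewrite fin_numD Gfin andbT; apply: ge0_fin_num_le (pos_integral_ge0 _ _) _ fgfin.
under [X in pos_integral _ X]eq_fun do rewrite -ge0_lneM //.
by apply: pos_integral_lne_le => //; exact: emeasurable_funM.
Qed.

Lemma norm0p_norm0m_le_integral f g : Lset f -> Lset g ->
  norm0p P f * norm0m P g <= \int[P]_x (f x * g x).
Proof.
move=> Lf Lg; have [mf f0] := Lf; have [mg g0] := Lg.
have fg_ge0 x : 0 <= f x * g x by exact: mule_ge0.
have ge0_int : 0 <= \int[P]_x (f x * g x) by apply: integral_ge0.
rewrite /norm0p /norm0m int_minusE int_plusE.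
have [Gfin|Ginf] := boolP (neg_integral P (fun x => lne (g x)) \is a fin_num); last first.
  by rewrite (neg_integral_infty _ _ Ginf) /= mule0.
case: ifPn => [Ffin|Finf]; last by rewrite integralM_pinfty ?leey.
have [NFfin|NFinf] := boolP (neg_integral P (fun x => lne (f x)) \is a fin_num); last first.
  by rewrite (neg_integral_infty _ _ NFinf) /= mul0e.
rewrite -expeRD -fin_neg_integralD //; try exact: measurable_lne_comp.
under eq_integral do rewrite -ge0_lneM //.
apply: le_trans (_ : expeR (lne (\int[P]_x (f x * g x))) <= _).
  by rewrite lee_expeR lne_integral_le //; exact: emeasurable_funM.
by rewrite lneK // in_itv /= ge0_int leey.
Qed.

Lemma norm0p_scale f (c : R) : (0 < c)%R -> Lset f ->
  norm0p P (fun x => c%:E * f x) = c%:E * norm0p P f.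
Proof.
move=> c0 [mf f0]; have c0' : 0 <= c%:E by rewrite lee_fin ltW.
rewrite /norm0p; under eq_fun do rewrite (ge0_lneM _ _ c0' (f0 _)) lne_EFin // addeC.
rewrite int_plus_shift; last exact: measurable_lne_comp.
by rewrite expeRD /= lnK ?posrE // muleC.
Qed.

Lemma norm0m_scale f (c : R) : (0 < c)%R -> Lset f ->
  norm0m P (fun x => c%:E * f x) = c%:E * norm0m P f.
Proof.
move=> c0 [mf f0]; have c0' : 0 <= c%:E by rewrite lee_fin ltW.
rewrite /norm0m !int_minusE.
under eq_integral do rewrite (ge0_lneM _ _ c0' (f0 _)) lne_EFin // addeC.
rewrite integral_shift; last exact: measurable_lne_comp.
by rewrite expeRD /= lnK ?posrE // muleC.
Qed.

Lemma norm0m_einv f : Lset f -> norm0m P (fun x => einv (f x)) = einv (norm0p P f).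
Proof.
case=> _ f0; rewrite /norm0m /norm0p.
by under eq_fun do rewrite lne_einv //; rewrite int_minusN expeRN.
Qed.

Lemma norm0p_einv f : Lset f -> norm0p P (fun x => einv (f x)) = einv (norm0m P f).
Proof.
case=> _ f0; rewrite /norm0m /norm0p.
by under eq_fun do rewrite lne_einv //; rewrite int_plusN expeRN.
Qed.

Lemma integralM_scaled_einv_le f (c : R) : Lset f -> (0 < c)%R ->
  \int[P]_x (f x * (c%:E * einv (f x))) <= c%:E.
Proof.
move=> Lf c0; have [mf f0] := Lf.
have [mg g0] := Lset_scale _ _ (ltW c0) (Lset_einv _ Lf).
rewrite -[leRHS](probability_integral_cst P); apply: ge0_le_integral => //.
- by move=> x _; apply: mule_ge0 => //; exact: g0.
- exact: emeasurable_funM.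
- by move=> x _; exact: mul_einv_le.
Qed.

(* [g := c / f] with [c] slightly larger than [N f] is admissible and almost attains the bound *)
Lemma dual_norm_eq_inf (N N' : (T -> \bar R) -> \bar R) f : Lset f -> 0 <= N f ->
  (forall g, Lset g -> 1 <= N' g -> N f <= \int[P]_x (f x * g x)) ->
  (forall c : R, (0 < c)%R -> N' (fun x => c%:E * einv (f x)) = c%:E * einv (N f)) ->
  N f = ereal_inf [set \int[P]_x (f x * g x) | g in [set g | Lset g /\ N' g >= 1]].
Proof.
move=> Lf Nf0 Nf_le N'_scale; apply/eqP; rewrite eq_le; apply/andP; split.
  by apply: le_ereal_inf_tmp => _ [g [Lg N'g] <-]; exact: Nf_le.
have [Nfin|Ninf] := boolP (N f \is a fin_num); last first.
  by move: Nf0 Ninf; case: (N f) => [r _ /negP[] //|_ _|//]; rewrite leey.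
apply/lee_addgt0Pr => e e0; rewrite -(fineK Nfin) -EFinD.
have c0 : (0 < fine (N f) + e)%R by rewrite ltr_wpDl // fine_ge0.
apply: ge_ereal_inf.
exists (\int[P]_x (f x * ((fine (N f) + e)%:E * einv (f x)))).
  exists (fun x => (fine (N f) + e)%:E * einv (f x)) => //; split.
    exact: Lset_scale _ _ (ltW c0) (Lset_einv _ Lf).
  by rewrite N'_scale // einv_ge1 // -[X in X < _](fineK Nfin) lte_fin ltrDl.
exact: integralM_scaled_einv_le.
Qed.

Lemma inf_integralM_superlinear (N : (T -> \bar R) -> \bar R) (G : set (T -> \bar R)) :
  G `<=` Lset -> (forall f, Lset f -> N f = ereal_inf [set \int[P]_x (f x * g x) | g in G]) ->
  forall (l1 l2 : R) f1 f2, (0 <= l1)%R -> (0 <= l2)%R -> Lset f1 -> Lset f2 ->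
    N (Ladd (Lscale l1 f1) (Lscale l2 f2)) >= l1%:E * N f1 + l2%:E * N f2.
Proof.
move=> GL Ninf l1 l2 f1 f2 l10 l20 L1 L2; rewrite [leRHS]Ninf; last exact: Lset_lin.
apply: le_ereal_inf_tmp => _ [g Gg <-]; rewrite integralM_lin //; last exact: GL.
by apply: leeD; apply: lee_wpmul2l; rewrite ?lee_fin // Ninf //;
  apply: ereal_inf_lbound; exists g.
Qed.

Lemma norm0p_eq_inf f : Lset f ->
  norm0p P f = ereal_inf [set \int[P]_x (f x * g x) | g in [set g | Lset g /\ norm0m P g >= 1]].
Proof.
move=> Lf; apply: dual_norm_eq_inf => //; first exact: expeR_ge0.
- move=> g Lg N'g; apply: le_trans (norm0p_norm0m_le_integral _ _ Lf Lg).
  by apply: lee_pemulr => //; exact: expeR_ge0.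
- by move=> c c0; rewrite norm0m_scale ?norm0m_einv //; exact: Lset_einv.
Qed.

Lemma norm0m_eq_inf f : Lset f ->
  norm0m P f = ereal_inf [set \int[P]_x (f x * g x) | g in [set g | Lset g /\ norm0p P g >= 1]].
Proof.
move=> Lf; apply: dual_norm_eq_inf => //; first exact: expeR_ge0.
- move=> g Lg Ng; under eq_integral do rewrite muleC.
  apply: le_trans (norm0p_norm0m_le_integral _ _ Lg Lf).
  by apply: lee_pemull => //; exact: expeR_ge0.
- by move=> c c0; rewrite norm0p_scale ?norm0p_einv //; exact: Lset_einv.
Qed.

Lemma norm0p_hyperbolic : is_hyperbolic_norm P (norm0p P).
Proof.
split.
- move=> f g [mf _] [mg _] fg; rewrite /norm0p (@int_plus_ae_eq _ _ _ P _ (fun x => lne (g x))) //.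
  + exact: measurable_lne_comp.
  + exact: measurable_lne_comp.
  + by apply: filterS fg => x ->.
- by move=> f _; exact: expeR_ge0.
- rewrite /norm0p /Lzero int_plusE.
  under eq_fun do rewrite le0_lneNy //.
  by rewrite pos_integral_cst maxNye /= probability_integral_cst.
- apply: inf_integralM_superlinear; last exact: norm0p_eq_inf.
  by move=> g [].
Qed.

Lemma norm0m_hyperbolic : is_hyperbolic_norm P (norm0m P).
Proof.
split.
- move=> f g [mf _] [mg _] fg; rewrite /norm0m (@int_minus_ae_eq _ _ _ P _ (fun x => lne (g x))) //.
  + exact: measurable_lne_comp.
  + exact: measurable_lne_comp.
  + by apply: filterS fg => x ->.
- by move=> f _; exact: expeR_ge0.
- rewrite /norm0m /Lzero int_minusE.
  by under eq_fun do rewrite le0_lneNy //; rewrite probability_integral_cst.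
- apply: inf_integralM_superlinear; last exact: norm0m_eq_inf.
  by move=> g [].
Qed.

End norm0.

Theorem mainTheorem19 (d : measure_display) (T : measurableType d) (R : realType)
    (P : probability T R) :
  is_hyperbolic_norm P (norm0p P) /\ is_hyperbolic_norm P (norm0m P) /\
  (forall f g, Lset f -> Lset g ->
     \int[P]_x (f x * g x) >= norm0p P f * norm0m P g) /\
  (forall f, Lset f ->
     norm0p P f = ereal_inf [set \int[P]_x (f x * g x) | g in
                              [set g | Lset g /\ norm0m P g >= 1]]) /\
  (forall f, Lset f ->
     norm0m P f = ereal_inf [set \int[P]_x (f x * g x) | g in
                              [set g | Lset g /\ norm0p P g >= 1]]) /\
  (forall f, Lset f -> norm0p P f = einv (norm0m P (fun x => einv (f x)))) /\
  (forall f, Lset f -> norm0m P f = einv (norm0p P (fun x => einv (f x)))).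
Proof.
split; first exact: norm0p_hyperbolic.
split; first exact: norm0m_hyperbolic.
split; first by move=> f g; exact: norm0p_norm0m_le_integral.
split; first exact: norm0p_eq_inf.
split; first exact: norm0m_eq_inf.
split=> f Lf.
- by rewrite norm0m_einv // einvK //; exact: expeR_ge0.
- by rewrite norm0p_einv // einvK //; exact: expeR_ge0.
Qed.
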